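(* Let $\mathbf A,\mathbf B\in\mathbb C^{n\times n}$, $k=\operatorname{Ind}\mathbf A$, $r=\operatorname{rank}\mathbf A^{k}$, and for $l\ge 0$ let $\hat{\mathbf B}^{(l)}=\mathbf A^{l}\mathbf B=(\hat b^{(l)}_{ij})$ with $j$-th column $\hat{\mathbf b}^{(l)}_{.j}$ (so $\hat{\mathbf B}^{(0)}=\mathbf B=(b_{ij})$). Let \[\mathbf X(t)=\mathbf A^{D}\mathbf B+\sum_{s=1}^{k}\frac{(-1)^{s-1}}{s!}\left(\mathbf A^{s-1}\mathbf B-\mathbf A^{D}\mathbf A^{s}\mathbf B\right)t^{s}\] (the partial solution of $\mathbf X'+\mathbf A\mathbf X=\mathbf B$). Writing $\Delta=\sum_{\beta\in J_{r,n}}\left|(\mathbf A^{k+1})^{\beta}_{\beta}\right|$ and $N_{ij}(l)=\sum_{\beta\in J_{r,n}\{i\}}\left|\left(\mathbf A^{k+1}_{.i}(\hat{\mathbf b}^{(l)}_{.j})\right)^{\beta}_{\beta}\right|$, the entries of $\mathbf X(t)=(x_{ij})$ are, for all $i,j=1,\dots,n$, \[x_{ij}=\frac{N_{ij}(k)}{\Delta}+\sum_{s=1}^{k}\frac{(-1)^{s-1}}{s!}\left(\hat b^{(s-1)}_{ij}-\frac{N_{ij}(k+s)}{\Delta}\right)t^{s}.\]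
   Context: $\operatorname{Ind}\mathbf A$ is the smallest nonnegative $k$ with $\operatorname{rank}\mathbf A^{k+1}=\operatorname{rank}\mathbf A^{k}$; the Drazin inverse $\mathbf A^{D}$ is the unique $\mathbf X$ with $\mathbf A^{k+1}\mathbf X=\mathbf A^{k}$, $\mathbf X\mathbf A\mathbf X=\mathbf X$, $\mathbf A\mathbf X=\mathbf X\mathbf A$. $\mathbf M_{.i}(\mathbf c)$ denotes $\mathbf M$ with its $i$-th column replaced by $\mathbf c$. $J_{r,n}$ is the set of strictly increasing sequences of $r$ elements of $\{1,\dots,n\}$, $J_{r,n}\{i\}=\{\beta\in J_{r,n}:i\in\beta\}$, $\mathbf M^{\beta}_{\beta}$ is the principal submatrix indexed by $\beta$, $|\cdot|$ is the determinant. *)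

From HB Require Import structures.
From mathcomp Require Import all_boot all_order all_algebra.
Set Implicit Arguments. Unset Strict Implicit. Unset Printing Implicit Defensive.
Import Order.TTheory GRing.Theory Num.Theory.
Local Open Scope ring_scope.

Definition is_index (C : fieldType) (n : nat) (A : 'M[C]_n) (k : nat) : Prop :=
  \rank (A ^+ k.+1) = \rank (A ^+ k) /\
  (forall m : nat, (m < k)%N -> \rank (A ^+ m.+1) <> \rank (A ^+ m)).

Definition is_drazin (C : fieldType) (n : nat) (A X : 'M[C]_n) : Prop :=
  exists k, is_index A k /\
    A ^+ k.+1 *m X = A ^+ k /\ X *m A *m X = X /\ A *m X = X *m A.

Definition colrep (C : fieldType) (n : nat) (M : 'M[C]_n) (i : 'I_n)
  (c : 'cV[C]_n) : 'M[C]_n :=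
  \matrix_(p, q) if q == i then c p 0 else M p q.

(* |M^beta_beta| : principal minor of M indexed by beta (a strictly
   increasing sequence in {1..n}, represented as a finite set whose
   elements are enumerated in increasing order). *)
Definition pminor (C : fieldType) (n : nat) (M : 'M[C]_n) (beta : {set 'I_n}) : C :=
  \det (\matrix_(p < #|beta|, q < #|beta|)
          M (@enum_val _ (mem beta) p) (@enum_val _ (mem beta) q)).

Definition Delta (C : fieldType) (n : nat) (A : 'M[C]_n) (k r : nat) : C :=
  \sum_(beta : {set 'I_n} | #|beta| == r) pminor (A ^+ k.+1) beta.

Definition Nij (C : fieldType) (n : nat) (A B : 'M[C]_n) (k r : nat)
  (i j : 'I_n) (l : nat) : C :=
  \sum_(beta : {set 'I_n} | (#|beta| == r) && (i \in beta))
     pminor (colrep (A ^+ k.+1) i (col j (A ^+ l *m B))) beta.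

Definition Xt (C : fieldType) (n : nat) (A AD B : 'M[C]_n) (k : nat) (t : C)
  : 'M[C]_n :=
  AD *m B + \sum_(1 <= s < k.+1)
     (((-1) ^+ s.-1 / (s`!)%:R) * t ^+ s) *: (A ^+ s.-1 *m B - AD *m A ^+ s *m B).

From HB Require Import structures.
From mathcomp Require Import all_boot all_order all_algebra all_fingroup.
From mathcomp Require Import zify.
Set Implicit Arguments. Unset Strict Implicit. Unset Printing Implicit Defensive.
Import Order.TTheory GRing.Theory Num.Theory.
Local Open Scope ring_scope.

(* Let M = A^(k+1), of rank r = rank A^k.  Since A^D = M (A^D)^(k+2), every
   column x of A^D A^s B lies in the column space of M, and A^(k+s) B equals
   M A^D A^s B.  The determinant of the regular polynomial matrix X + M is
   X^(n-r) times a polynomial whose constant term is Delta, the sum of the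
   principal r-minors of M; applying Cramer's rule to X + M, cancelling
   X^(n-r) and evaluating at 0 gives N_ij(k+s) = x_i Delta.  Delta is nonzero:
   for K = 1 - A A^D we have M K = 0 and M + K invertible, and then
   (X + M)(X + K) = X (X + M + K). *)

(* [pminor], generalized to commutative rings so that it applies to
   polynomial matrices; likewise [col_replace] below generalizes [colrep]. *)
Definition principal_minor (R : comPzRingType) (n : nat) (M : 'M[R]_n)
    (S : {set 'I_n}) : R :=
  \det (\matrix_(p < #|S|, q < #|S|)
          M (@enum_val _ (mem S) p) (@enum_val _ (mem S) q)).

Section PermExtension.
Variables (n : nat) (S : {set 'I_n}) (x0 : 'I_n) (x0S : x0 \in S).
Local Notation m := #|S|.
Local Notation e := (@enum_val _ (mem S)).
Local Notation rk := (enum_rank_in x0S).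

Definition extend_fun (t : 'S_m) (p : 'I_n) : 'I_n :=
  if p \in S then e (t (rk p)) else p.

Lemma extend_fun_inj t : injective (extend_fun t).
Proof.
move=> p q; rewrite /extend_fun.
case: ifP => pS; case: ifP => qS.
- move/enum_val_inj/perm_inj => h.
  by rewrite -(enum_rankK_in x0S pS) -(enum_rankK_in x0S qS) h.
- by move=> h; move: qS; rewrite -h enum_valP.
- by move=> h; move: pS; rewrite h enum_valP.
- by [].
Qed.

Definition extend_perm t : 'S_n := perm (@extend_fun_inj t).

Lemma extend_permE t p : extend_perm t p = extend_fun t p.
Proof. by rewrite permE. Qed.

Lemma extend_perm_on t : perm_on S (extend_perm t).
Proof.
apply/subsetP => p; rewrite inE extend_permE /extend_fun.
by case: ifP => //; rewrite eqxx.
Qed.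

Lemma extend_perm_enum_val t a : extend_perm t (e a) = e (t a).
Proof. by rewrite extend_permE /extend_fun enum_valP enum_valK_in. Qed.

Lemma extend_permM s t :
  extend_perm (s * t)%g = (extend_perm s * extend_perm t)%g.
Proof.
apply/permP => p; rewrite permM !extend_permE /extend_fun.
case: ifP => pS; last by rewrite pS.
by rewrite enum_valP enum_valK_in permM.
Qed.

Lemma extend_perm1 : extend_perm 1 = 1%g.
Proof.
apply/permP => p; rewrite perm1 extend_permE /extend_fun.
by case: ifP => // pS; rewrite perm1 enum_rankK_in.
Qed.

Lemma extend_perm_tperm a b : extend_perm (tperm a b) = tperm (e a) (e b).
Proof.
apply/permP => p; rewrite extend_permE /extend_fun; case: ifP => pS; last first.
  by rewrite tpermD //; apply/eqP => h; move: pS; rewrite -h enum_valP.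
rewrite -{2}(enum_rankK_in x0S pS).
case: (tpermP a b (rk p)) => [->|->|/eqP ha /eqP hb].
- by rewrite tpermL.
- by rewrite tpermR.
- by rewrite tpermD //; apply/eqP => /enum_val_inj; apply/eqP; rewrite eq_sym.
Qed.

Lemma odd_extend_perm t : odd_perm (extend_perm t) = odd_perm t.
Proof.
case: (prod_tpermP t) => ts -> hts.
rewrite (big_morph extend_perm extend_permM extend_perm1) odd_perm_prod //.
rewrite (eq_bigr (fun u => tperm (e u.1) (e u.2))); last first.
  by move=> u _; rewrite extend_perm_tperm.
rewrite -(big_map (fun u => (e u.1, e u.2)) xpredT (fun u => tperm u.1 u.2)).
rewrite odd_perm_prod ?size_map // all_map; apply: sub_all hts => u /=.
by apply: contra => /eqP/enum_val_inj ->.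
Qed.

(* Junk value: [restrict_fun s] is the identity unless [s] is supported on [S]. *)
Definition restrict_fun (s : 'S_n) (a : 'I_m) : 'I_m :=
  if perm_on S s then rk (s (e a)) else a.

Lemma restrict_fun_inj s : injective (restrict_fun s).
Proof.
move=> a b; rewrite /restrict_fun; case: ifP => [sS|//] h.
have sSe c : s (e c) \in S by rewrite perm_closed // enum_valP.
by move: h => /(congr1 e); rewrite !enum_rankK_in // => /perm_inj/enum_val_inj.
Qed.

Definition restrict_perm s : 'S_m := perm (@restrict_fun_inj s).

Lemma restrict_permK s : perm_on S s -> extend_perm (restrict_perm s) = s.
Proof.
move=> sS; apply/permP => p; rewrite extend_permE /extend_fun.
case: ifP => pS; last by rewrite (out_perm sS) // pS.
by rewrite permE /restrict_fun sS enum_rankK_in ?enum_rankK_in // perm_closed.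
Qed.

Lemma extend_permK t : restrict_perm (extend_perm t) = t.
Proof.
apply/permP => a; rewrite permE /restrict_fun extend_perm_on.
by rewrite extend_perm_enum_val enum_valK_in.
Qed.

End PermExtension.

Lemma principal_minor_perm_sum (R : comPzRingType) n (M : 'M[R]_n) (S : {set 'I_n}) :
  principal_minor M S =
  \sum_(s : 'S_n | perm_on S s) (-1) ^+ s * \prod_(p in S) M p (s p).
Proof.
rewrite /principal_minor /determinant.
have [S0 | /set0Pn [x0 x0S]] := eqVneq S set0; last first.
  rewrite (reindex_onto (extend_perm x0S) (restrict_perm x0S)); last first.
    by move=> s sS; rewrite restrict_permK.
  apply: eq_big => [t|t _]; first by rewrite extend_perm_on extend_permK eqxx.
  rewrite odd_extend_perm (big_enum_val (A := mem S)) /=.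
  by congr (_ * _); apply: eq_bigr => a _; rewrite mxE extend_perm_enum_val.
have card0 : #|S| = 0%N by rewrite S0 cards0.
have perm0 (t : 'S_#|S|) : t = 1%g.
  by apply/permP => -[a ha]; exfalso; move: ha; rewrite card0.
rewrite (big_pred1 1%g) => [|t]; last by rewrite /= (perm0 t) eqxx.
rewrite [RHS](big_pred1 1%g) => [|s /=]; last first.
  apply/idP/eqP => [sS|->]; last exact: perm_on1.
  by apply/permP => p; rewrite perm1 (out_perm sS) // S0 inE.
rewrite !odd_perm1 !big_pred0 // => [p|[a ha]]; first by rewrite S0 inE.
by exfalso; move: ha; rewrite card0.
Qed.

Lemma prod_fixed_outside (R : comPzRingType) n (S : {set 'I_n}) (s : 'S_n) :
  \prod_(p in ~: S) ((p == s p)%:R : R) = (perm_on S s)%:R.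
Proof.
have [sS | /subsetPn [p]] := boolP (perm_on S s).
  by apply: big1 => p; rewrite inE => pS; rewrite (out_perm sS pS) eqxx.
rewrite !inE => sp pS.
by rewrite (bigD1 p) ?inE //= eq_sym (negPf sp) mul0r.
Qed.

Lemma det_diag_add (R : comPzRingType) n (d : 'rV[R]_n) (M : 'M[R]_n) :
  \det (diag_mx d + M) =
  \sum_(S : {set 'I_n}) (\prod_(p in ~: S) d 0 p) * principal_minor M S.
Proof.
rewrite /determinant.
under eq_bigr => s _.
  under eq_bigr => p _ do rewrite !mxE -mulr_natl addrC.
  rewrite bigA_distr big_distrr /=.
  over.
rewrite exchange_big /=; apply: eq_bigr => S _.
rewrite principal_minor_perm_sum big_distrr /= [RHS]big_mkcond /=.
apply: eq_bigr => s _.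
have -> : \prod_p (if p \in S then M p (s p) else (p == s p)%:R * d 0 p) =
    (\prod_(p in S) M p (s p)) * \prod_(p in ~: S) ((p == s p)%:R * d 0 p).
  rewrite (bigID (mem S)) /=; congr (_ * _).
    by apply: eq_bigr => p; case: (p \in S).
  by apply: eq_big => p; rewrite ?inE //; case: (p \in S).
rewrite big_split /= prod_fixed_outside.
case: (perm_on S s); last by rewrite !(mul0r, mulr0).
by rewrite mul1r mulrA mulrC.
Qed.

Lemma principal_minor_rank_eq0 (F : fieldType) n (M : 'M[F]_n) (S : {set 'I_n}) :
  (\rank M < #|S|)%N -> principal_minor M S = 0.
Proof.
apply: contraTeq; rewrite /principal_minor -leqNgt => minor_neq0.
set e := @enum_val _ (mem S).
have sub_eq : \matrix_(p < #|S|, q < #|S|) M (e p) (e q) = mxsub e e M.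
  by apply/matrixP => p q; rewrite !mxE.
rewrite sub_eq in minor_neq0.
have sub_unit : mxsub e e M \in unitmx by rewrite unitmxE unitfE.
rewrite -(mxrank_unit sub_unit) -[M]mul1mx mxsub_mul.
apply: leq_trans (mxrankM_maxr _ _) _.
by rewrite -[M]mulmx1 -mulmx_colsub mul1mx mulmx1 mxrankM_maxl.
Qed.

Definition col_replace (R : comPzRingType) (n : nat) (M : 'M[R]_n) (i : 'I_n)
    (c : 'cV[R]_n) : 'M[R]_n :=
  \matrix_(p, q) if q == i then c p 0 else M p q.

Section ColReplace.
Variables (R : comPzRingType) (n : nat).

Lemma det_col_replace (P : 'M[R]_n) i c :
  \det (col_replace P i c) = \sum_p c p 0 * cofactor P p i.
Proof.
rewrite (expand_det_col _ i); apply: eq_bigr => p _.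
rewrite !mxE eqxx /cofactor; congr (_ * (_ * \det _)).
by apply/matrixP => a b; rewrite !mxE eq_sym (negPf (neq_lift i b)).
Qed.

Lemma det_col_replaceB (P : 'M[R]_n) i (c1 c2 : 'cV[R]_n) a :
  \det (col_replace P i (c1 - a *: c2)) =
  \det (col_replace P i c1) - a * \det (col_replace P i c2).
Proof.
rewrite !det_col_replace big_distrr -sumrB; apply: eq_bigr => p _.
by rewrite !mxE /= mulrBl mulrA.
Qed.

Lemma det_col_replace_mul (P : 'M[R]_n) i (z : 'cV[R]_n) :
  \det (col_replace P i (P *m z)) = z i 0 * \det P.
Proof.
rewrite det_col_replace.
under eq_bigr => p _ do rewrite mxE big_distrl /=.
rewrite exchange_big /=.
have adj_entry q :
    \sum_p P p q * z q 0 * cofactor P p i = z q 0 * (\det P)%:M i q.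
  have := congr1 (fun N : 'M[R]_n => N i q) (mul_adj_mx P); rewrite !mxE => <-.
  rewrite big_distrr /=; apply: eq_bigr => p _; rewrite !mxE.
  by rewrite -mulrA mulrCA [P p q * _]mulrC.
under eq_bigr => q _ do rewrite adj_entry.
rewrite (bigD1 i) //= big1 ?addr0 => [|q qi]; first by rewrite !mxE eqxx mulr1n.
by rewrite !mxE eq_sym (negPf qi) mulr0n mulr0.
Qed.

Lemma col_replace_mul (M : 'M[R]_n) i (y : 'cV[R]_n) :
  col_replace M i (M *m y) = M *m col_replace 1%:M i y.
Proof.
apply/matrixP => p q; rewrite !mxE; case: eqP => [qi|/eqP/negPf qi].
  by apply: eq_bigr => l _; rewrite !mxE qi eqxx.
rewrite -{1}[M]mulmx1 mxE.
by apply: eq_bigr => l _; rewrite !mxE qi.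
Qed.

End ColReplace.

Section MinorPoly.
Variables (F : fieldType) (n : nat).
Local Notation "A ^P" := (map_mx polyC A) (at level 2, format "A ^P").

Definition minor_poly (M : 'M[F]_n) (r : nat) (P : pred {set 'I_n}) : {poly F} :=
  \sum_(S | P S) 'X^(r - #|S|) * (principal_minor M S)%:P.

Definition rank_minors_sum (M : 'M[F]_n) : F :=
  \sum_(S : {set 'I_n} | #|S| == \rank M) principal_minor M S.

Lemma principal_minor_map (M : 'M[F]_n) S :
  principal_minor M^P S = (principal_minor M S)%:P.
Proof.
rewrite /principal_minor -det_map_mx; congr (\det _).
by apply/matrixP => p q; rewrite !mxE.
Qed.

Lemma det_scalarX_add (M : 'M[F]_n) :
  \det ('X%:M + M^P) = minor_poly M n xpredT.
Proof.
rewrite -diag_const_mx det_diag_add; apply: eq_bigr => S _.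
rewrite (eq_bigr (fun _ => 'X)) => [|p _]; last by rewrite mxE.
by rewrite prodr_const cardsCs setCK card_ord principal_minor_map.
Qed.

Lemma det_scalarX_add_col_replace (M : 'M[F]_n) (c : 'cV[F]_n) i :
  \det (col_replace ('X%:M + M^P) i c^P) =
  minor_poly (col_replace M i c) n (fun S => i \in S).
Proof.
have -> : col_replace ('X%:M + M^P) i c^P =
    diag_mx (\row_p (if p == i then 0 else 'X)) + (col_replace M i c)^P.
  apply/matrixP => p q; rewrite !mxE; case: eqP => [->|/eqP qi].
    by case: (p == i); rewrite ?mul0rn ?mulr0n ?add0r.
  by case: eqP => [->|_]; rewrite ?(negPf qi) ?mulr0n.
rewrite det_diag_add /minor_poly [RHS]big_mkcond /=; apply: eq_bigr => S _.
rewrite principal_minor_map; case: ifP => iS.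
  rewrite (eq_bigr (fun _ => 'X)) => [|p]; last first.
    by rewrite inE mxE => pS; case: eqP => // pi; move: pS; rewrite pi iS.
  by rewrite prodr_const cardsCs setCK card_ord.
by rewrite (bigD1 i) ?inE ?iS //= mxE eqxx !mul0r.
Qed.

Lemma minor_poly_factor (M : 'M[F]_n) r P :
  (\rank M <= r)%N -> (r <= n)%N ->
  minor_poly M n P = 'X^(n - r) * minor_poly M r P.
Proof.
move=> rkM rn; rewrite /minor_poly big_distrr /=; apply: eq_bigr => S _.
have [Sr|rS] := leqP #|S| r.
  by rewrite mulrA -exprD addnBA // subnK.
by rewrite principal_minor_rank_eq0 ?polyC0 ?mulr0 // (leq_ltn_trans rkM rS).
Qed.

Lemma minor_poly_horner0 (M : 'M[F]_n) r P : (\rank M <= r)%N ->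
  (minor_poly M r P).[0] = \sum_(S | P S && (#|S| == r)) principal_minor M S.
Proof.
move=> rkM; rewrite horner_sum [RHS]big_mkcondr /=; apply: eq_bigr => S _.
rewrite hornerM hornerXn hornerC.
case: (ltngtP #|S| r) => [Sr|rS|->].
- by rewrite expr0n subn_eq0 leqNgt Sr mul0r.
- by rewrite principal_minor_rank_eq0 ?mulr0 // (leq_ltn_trans rkM rS).
- by rewrite subnn expr0 mul1r.
Qed.

Lemma det_scalarX_add_factor (M : 'M[F]_n) r :
  (\rank M <= r)%N -> (r <= n)%N ->
  \det ('X%:M + M^P) = 'X^(n - r) * minor_poly M r xpredT.
Proof. by move=> rkM rn; rewrite det_scalarX_add (minor_poly_factor _ rkM rn). Qed.

(* Cramer's rule for the regular matrix ['X%:M + M], evaluated at [0] after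
   cancelling the common factor ['X^(n - rank M)]. *)
Lemma principal_minors_cramer (M : 'M[F]_n) (x y : 'cV[F]_n) (i : 'I_n) :
  x = M *m y ->
  \sum_(S : {set 'I_n} | (#|S| == \rank M) && (i \in S))
     principal_minor (col_replace M i (M *m x)) S = x i 0 * rank_minors_sum M.
Proof.
move=> xE; set r := \rank M; have rn : (r <= n)%N by apply: rank_leq_row.
set P := 'X%:M + M^P.
have Mx_split : (M *m x)^P = P *m x^P - 'X *: x^P.
  by rewrite /P mulmxDl mul_scalar_mx map_mxM addrC addKr.
have cramerP : \det (col_replace P i (M *m x)^P) =
    (x i 0)%:P * \det P - 'X * \det (col_replace P i x^P).
  by rewrite Mx_split det_col_replaceB det_col_replace_mul mxE.
have rk1 : (\rank (col_replace M i (M *m x)) <= r)%N.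
  by rewrite col_replace_mul mxrankM_maxl.
have rk2 : (\rank (col_replace M i x) <= r)%N.
  by rewrite xE col_replace_mul mxrankM_maxl.
move: cramerP; rewrite /P !det_scalarX_add_col_replace (minor_poly_factor _ rk1 rn).
rewrite (minor_poly_factor _ rk2 rn) (det_scalarX_add_factor (leqnn _) rn) -/r.
rewrite [(x i 0)%:P * _]mulrCA ['X * _]mulrCA -mulrBr.
move=> /(mulfI (expf_neq0 _ (negbT (polyX_eq0 _)))) /(congr1 (horner^~ 0)).
rewrite !hornerE !minor_poly_horner0 // subr0 => cramer0.
apply: etrans (etrans _ cramer0) _ => //.
by apply: eq_bigl => S; rewrite andbC.
Qed.

(* Compare the lowest-order coefficients of [\det (('X + M) ('X + K))] and
   [\det ('X ('X + M + K))]. *)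
Lemma rank_minors_sum_neq0 (M K : 'M[F]_n) :
  M *m K = 0 -> M + K \in unitmx -> rank_minors_sum M != 0.
Proof.
move=> MK0 MK_unit; set r := \rank M; have rn : (r <= n)%N by apply: rank_leq_row.
have rkK : (\rank K <= n - r)%N.
  have : (M <= kermx K)%MS by rewrite sub_kermx MK0.
  move/mxrankS; rewrite mxrank_ker /r; have := rank_leq_row K; lia.
have prodE : ('X%:M + M^P) *m ('X%:M + K^P) = 'X *: ('X%:M + (M + K)^P).
  rewrite mulmxDl !mulmxDr -map_mxM MK0 map_mx0 addr0 !mul_scalar_mx.
  by rewrite mul_mx_scalar map_mxD !scalerDr -addrA [_ *: K^P + _]addrC.
have := congr1 determinant prodE.
rewrite det_mulmx detZ (det_scalarX_add_factor (leqnn _) rn).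
rewrite (det_scalarX_add_factor rkK (leq_subr _ _)) -/r subKn // mulrACA.
rewrite -exprD subnK // => /(mulfI (expf_neq0 _ (negbT (polyX_eq0 _)))).
move=> /(congr1 (horner^~ 0)); rewrite hornerM !minor_poly_horner0 //.
have -> : (\det ('X%:M + (M + K)^P)).[0] = \det (M + K).
  rewrite -horner_evalE -det_map_mx; congr (\det _).
  apply/matrixP => p q; rewrite !mxE /= /horner_eval.
  by rewrite hornerD hornerMn hornerX hornerC mul0rn add0r.
move: MK_unit; rewrite unitmxE unitfE => /[swap] <-.
by apply: contraNneq; rewrite /rank_minors_sum -/r => ->; rewrite mul0r.
Qed.

End MinorPoly.

Section DrazinRing.
Variables (R : pzRingType) (A D : R) (k : nat).
Hypotheses (AkD : A ^+ k.+1 * D = A ^+ k) (DAD : D * A * D = D)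
  (AD_comm : A * D = D * A).

Lemma drazin_idem : (A * D) ^+ 2 = A * D.
Proof. by rewrite expr2 -mulrA [D * (A * D)]mulrA DAD. Qed.

Lemma drazin_idemX m : (A * D) ^+ m.+1 = A * D.
Proof. by elim: m => [|m IHm]; rewrite ?expr1 // exprS IHm -expr2 drazin_idem. Qed.

Lemma drazin_expM : A ^+ k.+1 * D ^+ k.+1 = A * D.
Proof. by rewrite -exprMn_comm ?drazin_idemX. Qed.

Lemma drazin_exp_factor : A ^+ k.+1 * D ^+ k.+2 = D.
Proof. by rewrite [D ^+ k.+2]exprSr mulrA drazin_expM AD_comm DAD. Qed.

Lemma drazin_exp_compl0 : A ^+ k.+1 * (1 - A * D) = 0.
Proof. by rewrite mulrBr mulr1 AD_comm mulrA AkD -exprSr subrr. Qed.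

Lemma drazin_exp_add_compl_inverse :
  (A ^+ k.+1 + (1 - A * D)) * (D ^+ k.+1 + (1 - A * D)) = 1.
Proof.
have ADDk : A * D * D ^+ k.+1 = D ^+ k.+1.
  by rewrite exprS mulrA AD_comm DAD.
have compl_idem : (1 - A * D) * (1 - A * D) = 1 - A * D.
  by rewrite mulrBl mul1r mulrBr mulr1 -expr2 drazin_idem subrr subr0.
rewrite mulrDl (mulrDr (A ^+ k.+1)) (mulrDr (1 - A * D)).
rewrite drazin_expM drazin_exp_compl0 compl_idem addr0.
by rewrite mulrBl mul1r ADDk subrr add0r addrC subrK.
Qed.

End DrazinRing.

Lemma is_index_uniq (F : fieldType) n (A : 'M[F]_n) k k' :
  is_index A k -> is_index A k' -> k = k'.
Proof.
move=> [rk min_k] [rk' min_k']; case: (ltngtP k k') => // [kk'|k'k].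
- by have := min_k' _ kk'; rewrite rk.
- by have := min_k _ k'k; rewrite rk'.
Qed.

Section DrazinCramer.
Variables (F : fieldType) (n : nat) (A B D : 'M[F]_n) (k : nat).
Hypotheses (Aind : is_index A k) (AkD : A ^+ k.+1 * D = A ^+ k)
  (DAD : D * A * D = D) (AD_comm : A * D = D * A).

Lemma Delta_rank_minors :
  Delta A k (\rank (A ^+ k)) = rank_minors_sum (A ^+ k.+1).
Proof. by case: Aind => rkE _; rewrite /rank_minors_sum rkE. Qed.

Lemma Delta_neq0 : Delta A k (\rank (A ^+ k)) != 0.
Proof.
rewrite Delta_rank_minors; apply: (@rank_minors_sum_neq0 _ _ _ (1 - A * D)).
  by rewrite mulmxE drazin_exp_compl0.
have := drazin_exp_add_compl_inverse AkD DAD AD_comm.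
by rewrite -mulmxE -idmxE => /mulmx1_unit [].
Qed.

Lemma Nij_div_Delta s i j :
  Nij A B k (\rank (A ^+ k)) i j (k + s) / Delta A k (\rank (A ^+ k)) =
  (D *m A ^+ s *m B) i j.
Proof.
have col_mul (X Y : 'M[F]_n) : col j (X *m Y) = X *m col j Y.
  by rewrite !colE mulmxA.
have AkD' : A ^+ k.+1 *m D = A ^+ k := AkD.
have factor : A ^+ k.+1 *m D ^+ k.+2 = D := drazin_exp_factor k DAD AD_comm.
set x := col j (D *m A ^+ s *m B).
have xE : x = A ^+ k.+1 *m col j (D ^+ k.+2 *m (A ^+ s *m B)).
  by rewrite /x -mulmxA -col_mul [in RHS]mulmxA factor.
have col_exp : col j (A ^+ (k + s) *m B) = A ^+ k.+1 *m x.
  by rewrite /x -mulmxA -col_mul [in RHS]mulmxA AkD' exprD mulmxA.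
have := principal_minors_cramer i xE.
case: (Aind) => rkE _; rewrite -Delta_rank_minors rkE => cramer.
rewrite /Nij col_exp [X in X / _](_ : _ = x i 0 * Delta A k (\rank (A ^+ k))).
  by rewrite mulfK ?Delta_neq0 // mxE.
exact: cramer.
Qed.

End DrazinCramer.

Theorem theorem5p2 (C : numClosedFieldType) (n : nat) (A B AD : 'M[C]_n)
  (k r : nat) (t : C) :
  is_index A k -> r = \rank (A ^+ k) -> is_drazin A AD ->
  Delta A k r != 0 /\
  forall i j : 'I_n,
    Xt A AD B k t i j =
      Nij A B k r i j k / Delta A k r +
      \sum_(1 <= s < k.+1)
        ((-1) ^+ s.-1 / (s`!)%:R) *
        ((A ^+ s.-1 *m B) i j - Nij A B k r i j (k + s) / Delta A k r) * t ^+ s.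
Proof.
move=> Aind -> [k' [Aind' [AkD [DAD AD_comm]]]].
have k'E : k' = k := is_index_uniq Aind' Aind; subst k'.
rewrite !mulmxE in AkD DAD AD_comm.
split; first exact: Delta_neq0 Aind AkD DAD AD_comm.
move=> i j; have NE := Nij_div_Delta B Aind AkD DAD AD_comm.
have := NE 0%N i j; rewrite addn0 expr0 mulmx1 => N0.
rewrite /Xt mxE summxE -N0; congr (_ + _); apply: eq_big_nat => s _.
by rewrite mxE [X in _ * X]mxE [(- (_ : 'M_n)) i j]mxE NE mulrAC.
Qed.
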